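(* Let $A,A^*$ be a Leonard pair in $\mathcal A$. Then there exists a unique antiautomorphism $\dagger$ of $\mathcal A$ such that $A^\dagger=A$ and $A^{*\dagger}=A^*$. Moreover $X^{\dagger\dagger}=X$ for all $X\in\mathcal A$.
   Context: Let $\mathbb K$ be a field, $d\ge 0$ an integer, and $\mathcal A$ a $\mathbb K$-algebra isomorphic to $\mathrm{Mat}_{d+1}(\mathbb K)$; let $V$ be an irreducible left $\mathcal A$-module. A square matrix is tridiagonal if every nonzero entry lies on the diagonal, subdiagonal or superdiagonal; a tridiagonal matrix is irreducible if all subdiagonal and superdiagonal entries are nonzero. A Leonard pair in $\mathcal A$ is an ordered pair $A,A^*\in\mathcal A$ ($A^*$ is just a name, not an adjoint) such that (i) there is a basis of $V$ w.r.t. which the matrix of $A$ is irreducible tridiagonal and the matrix of $A^*$ is diagonal, and (ii) there is a basis of $V$ w.r.t. which the matrix of $A^*$ is irreducible tridiagonal and the matrix of $A$ is diagonal. An antiautomorphism of $\mathcal A$ is a $\mathbb K$-linear bijection $\sigma:\mathcal A\to\mathcal A$ with $(XY)^\sigma=Y^\sigma X^\sigma$ for all $X,Y\in\mathcal A$. *)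

From HB Require Import structures.
From mathcomp Require Import all_boot all_order all_algebra.
Set Implicit Arguments. Unset Strict Implicit. Unset Printing Implicit Defensive.
Import GRing.Theory.
Local Open Scope ring_scope.

Definition tridiag {K : fieldType} {n : nat} (B : 'M[K]_n) : Prop :=
  forall i j : 'I_n, (i.+1 < j)%N \/ (j.+1 < i)%N -> B i j = 0.

Definition irr_tridiag {K : fieldType} {n : nat} (B : 'M[K]_n) : Prop :=
  tridiag B /\
  forall i j : 'I_n, (j == i.+1 :> nat) || (i == j.+1 :> nat) -> B i j != 0.

(* Matrix of the endomorphism X of V = 'cV_n with respect to the basis given by
   the columns of the invertible matrix P. *)
Definition mx_wrt {K : fieldType} {n : nat} (P X : 'M[K]_n) : 'M[K]_n :=
  invmx P *m X *m P.

Definition leonard_pair_mx {K : fieldType} {n : nat} (A As : 'M[K]_n) : Prop :=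
  (exists P : 'M[K]_n, P \in unitmx /\
      irr_tridiag (mx_wrt P A) /\ is_diag_mx (mx_wrt P As)) /\
  (exists Q : 'M[K]_n, Q \in unitmx /\
      irr_tridiag (mx_wrt Q As) /\ is_diag_mx (mx_wrt Q A)).

(* Leonard pair in an algebra calA, given an algebra isomorphism
   phi : Mat_{d+1}(K) -> calA; V is the irreducible module K^{d+1},
   on which calA acts through phi^{-1}. *)
Definition leonard_pair {K : fieldType} {d : nat} {calA : algType K}
  (phi : 'M[K]_(d.+1) -> calA) (A As : calA) : Prop :=
  exists MA MAs : 'M[K]_(d.+1),
    phi MA = A /\ phi MAs = As /\ leonard_pair_mx MA MAs.

Definition antiautomorphism {K : fieldType} {calA : algType K} (s : calA -> calA) : Prop :=
  [/\ (forall (k : K) (X Y : calA), s (k *: X + Y) = k *: s X + s Y),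
      bijective s &
      (forall X Y : calA, s (X * Y) = s Y * s X)].

From HB Require Import structures.
From mathcomp Require Import all_boot all_order all_algebra.
From mathcomp Require Import zify ring.
Set Implicit Arguments. Unset Strict Implicit. Unset Printing Implicit Defensive.
Import GRing.Theory.
Local Open Scope ring_scope.

(* Conjugate so that A is irreducible tridiagonal and A* is diagonal. The
   diagonal matrix D whose consecutive ratios are the ratios of subdiagonal to
   superdiagonal entries satisfies D A^T = A D, so X |-> D X^T D^-1 is an
   involutive antiautomorphism fixing A and A*. For uniqueness, A and A*
   generate the whole matrix algebra: the eigenvalues of A* are distinct
   (viewed in the other basis, an eigenvector of an irreducible tridiagonal
   matrix is determined by its first coordinate), so Lagrange interpolation in
   A* gives the diagonal matrix units e_ii, the products e_ii A e_jj give the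
   adjacent units, and chains of these give all e_ij. Two antiautomorphisms
   agreeing on generators agree everywhere. *)

Definition subalg_closed (K : fieldType) (calA : algType K) (S : calA -> Prop) :=
  [/\ S 1, forall k X Y, S X -> S Y -> S (k *: X + Y)
         & forall X Y, S X -> S Y -> S (X * Y)].

Section SubalgClosed.
Variables (K : fieldType) (calA : algType K) (S : calA -> Prop).
Hypothesis closedS : subalg_closed S.

Lemma subalg_closed0 : S 0.
Proof.
have [S1 SL _] := closedS.
by have := SL (-1) _ _ S1 S1; rewrite scaleN1r addNr.
Qed.

Lemma subalg_closedZ k X : S X -> S (k *: X).
Proof.
have [_ SL _] := closedS.
by move=> SX; have := SL k _ _ SX subalg_closed0; rewrite addr0.
Qed.

Lemma subalg_closedD X Y : S X -> S Y -> S (X + Y).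
Proof.
have [_ SL _] := closedS.
by move=> SX SY; have := SL 1 _ _ SX SY; rewrite scale1r.
Qed.

End SubalgClosed.

Lemma subalg_closed_comap (K : fieldType) (calA calB : algType K)
    (f : {lrmorphism calA -> calB}) (S : calB -> Prop) :
  subalg_closed S -> subalg_closed (fun X => S (f X)).
Proof.
move=> [S1 SL SM]; split=> [|k X Y SX SY|X Y SX SY].
- by rewrite rmorph1.
- by rewrite linearP; apply: SL.
- by rewrite rmorphM; apply: SM.
Qed.

Lemma mx_wrtK (K : fieldType) (n : nat) (P X : 'M[K]_n.+1) :
  P \in unitmx -> P *m mx_wrt P X *m invmx P = X.
Proof. by move=> Pu; rewrite /mx_wrt !mulmxA mulmxV // mul1mx mulmxK. Qed.

Lemma subalg_closed_conj (K : fieldType) (n : nat) (P : 'M[K]_n.+1)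
    (S : 'M[K]_n.+1 -> Prop) :
  P \in unitmx -> subalg_closed S -> subalg_closed (fun X => S (P *m X *m invmx P)).
Proof.
move=> Pu [S1 SL SM]; split=> [|k X Y SX SY|X Y SX SY].
- by rewrite mulmx1 mulmxV.
- by rewrite mulmxDr mulmxDl -scalemxAr -scalemxAl; apply: SL.
- have := SM _ _ SX SY; rewrite -!mulmxE !mulmxA.
  by rewrite -[_ *m invmx P *m P]mulmxA mulVmx ?mulmx1.
Qed.

Lemma antiautomorphism1 (K : fieldType) (calA : algType K) (s : calA -> calA) :
  antiautomorphism s -> s 1 = 1.
Proof.
move=> [_ [g _ gK] sM].
by have := sM (g 1) 1; rewrite mulr1 gK => sg1; rewrite -[LHS]mulr1 -sg1.
Qed.

Lemma antiautomorphism_eq_closed (K : fieldType) (calA : algType K) (s t : calA -> calA) :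
  antiautomorphism s -> antiautomorphism t -> subalg_closed (fun X => s X = t X).
Proof.
move=> sA tA; have [sL _ sM] := sA; have [tL _ tM] := tA.
split=> [|k X Y sX sY|X Y sX sY].
- by rewrite !antiautomorphism1.
- by rewrite sL tL sX sY.
- by rewrite sM tM sX sY.
Qed.

Section Generation.
Variables (K : fieldType) (n : nat).
Local Notation M := 'M[K]_n.+1.

Lemma diag_mx_prod_entry (I : Type) (s : seq I) (P : pred I) (F : I -> 'rV[K]_n.+1) x y :
  (\prod_(j <- s | P j) (diag_mx (F j) : M)) x y
    = (x == y)%:R * \prod_(j <- s | P j) F j 0 x.
Proof.
elim: s => [|a s IH]; first by rewrite !big_nil !mxE mulr1.
rewrite !big_cons; case: (P a) => //.
by rewrite -mulmxE mul_diag_mx mxE IH mulrCA.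
Qed.

Lemma delta_mx_sandwich (B : M) i j :
  delta_mx i i *m B *m delta_mx j j = B i j *: delta_mx i j.
Proof.
apply/matrixP => x y; rewrite !mxE (bigD1 j) //= big1 => [|l /negbTE nl]; last first.
  by rewrite !mxE nl /= mulr0.
rewrite !mxE eqxx /= addr0 (bigD1 i) //= big1 => [|l /negbTE nl]; last first.
  by rewrite !mxE nl andbF mul0r.
rewrite !mxE eqxx andbT addr0.
by case: (x == i); case: (y == j); rewrite /= ?mul1r ?mul0r ?mulr0 ?mulr1.
Qed.

Variables (S : M -> Prop) (B : M) (th : 'rV[K]_n.+1).
Hypotheses (closedS : subalg_closed S) (irrB : irr_tridiag B)
  (th_inj : forall i j, th 0 i = th 0 j -> i = j) (SB : S B) (Sth : S (diag_mx th)).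

Let SL k X Y : S X -> S Y -> S (k *: X + Y).
Proof. by case: closedS => _ SL _; apply: SL. Qed.

Let SM X Y : S X -> S Y -> S (X *m Y).
Proof. by case: closedS => _ _ SM; rewrite mulmxE; apply: SM. Qed.

(* Lagrange interpolation in [diag_mx th]: the idempotent [delta_mx i i] is
   the product of the [(diag_mx th - th_j) / (th_i - th_j)], [j != i]. *)
Lemma subalg_delta_diag i : S (delta_mx i i).
Proof.
pose c j := (th 0 i - th 0 j)^-1.
have -> : delta_mx i i
    = \prod_(j | j != i) (diag_mx (\row_k (c j * (th 0 k - th 0 j))) : M).
  apply/matrixP => x y; rewrite diag_mx_prod_entry mxE.
  have [->|xi] := eqVneq x i; last first.
    by rewrite (bigD1 x) //= mxE subrr mulr0 mul0r mulr0.
  rewrite big1 ?mulr1 => [|j ji]; first by rewrite eq_sym.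
  rewrite mxE mulVf // subr_eq0.
  by apply: contra ji => /eqP/th_inj ->.
apply: big_ind; [by case: closedS => S1 | by move=> X Y; rewrite -mulmxE; apply: SM |].
move=> j _; have -> : (diag_mx (\row_k (c j * (th 0 k - th 0 j))) : M)
    = c j *: diag_mx th + (- (c j * th 0 j)) *: 1%:M.
  apply/matrixP => x y; rewrite !mxE.
  by case: (x == y); rewrite /= ?mulr1n ?mulr0n ?mulr1 ?mulr0 ?addr0; [ring|].
by apply: SL => //; apply: subalg_closedZ => //; case: closedS => S1.
Qed.

Lemma subalg_delta_adj (i j : 'I_n.+1) :
  (j == i.+1 :> nat) || (i == j.+1 :> nat) -> S (delta_mx i j).
Proof.
move=> adj; have Bij_neq0 := irrB.2 i j adj.
have := subalg_closedZ closedS (B i j)^-1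
  (SM (SM (subalg_delta_diag i) SB) (subalg_delta_diag j)).
by rewrite delta_mx_sandwich scalerA mulVf // scale1r.
Qed.

Let e (a b : nat) : M := delta_mx (inord a) (inord b).

Lemma subalg_delta_dist k a : (a + k <= n)%N -> S (e a (a + k)) /\ S (e (a + k) a).
Proof.
elim: k a => [|k IH] a le_akn; first by rewrite addn0; split; apply: subalg_delta_diag.
have [Su Sd] := IH a.+1 ltac:(lia).
have [Sup1 Sdown1] : S (e a a.+1) /\ S (e a.+1 a).
  by split; apply: subalg_delta_adj; rewrite !inordK ?eqxx ?orbT //; lia.
rewrite -addSnnS; split.
  have <- : e a a.+1 *m e a.+1 (a.+1 + k) = e a (a.+1 + k) by rewrite mul_delta_mx.
  exact: SM.
have <- : e (a.+1 + k) a.+1 *m e a.+1 a = e (a.+1 + k) a by rewrite mul_delta_mx.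
exact: SM.
Qed.

Lemma irr_tridiag_diag_generate X : S X.
Proof.
rewrite (matrix_sum_delta X).
have S0 := subalg_closed0 closedS; have SD := subalg_closedD closedS.
apply: big_ind => // i _; apply: big_ind => // j _; apply: subalg_closedZ => //.
have [le_ij|lt_ji] := leqP i j.
  have := (subalg_delta_dist (a := i) (k := j - i) ltac:(have := ltn_ord j; lia)).1.
  by rewrite /e subnKC // !inord_val.
have := (subalg_delta_dist (a := j) (k := i - j) ltac:(have := ltn_ord i; lia)).2.
by rewrite /e subnKC ?(ltnW lt_ji) // !inord_val.
Qed.

End Generation.

Section Eigenvalues.
Variables (K : fieldType) (n : nat).
Local Notation M := 'M[K]_n.+1.
Local Notation V := 'cV[K]_n.+1.

(* Row [m] of [B v = t v] determines [v_(m+1)] from [v_m] and [v_(m-1)],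
   since [B_(m,m+1) != 0]. *)
Lemma irr_tridiag_eigvec_eq0 (B : M) (v : V) t :
  irr_tridiag B -> B *m v = t *: v -> v 0 0 = 0 -> v = 0.
Proof.
move=> [trB nzB] Bv v0.
suff vk0 m (k : 'I_n.+1) : (k <= m)%N -> v k 0 = 0.
  by apply/matrixP => x y; rewrite (ord1 y) mxE (vk0 x).
elim: m k => [|m IH] k le_km.
  by rewrite (_ : k = 0) //; apply/val_inj => /=; lia.
have [|lt_mk] := leqP k m; first exact: IH.
have lt_mn : (m < n.+1)%N by have := ltn_ord k; lia.
have := congr1 (fun w : V => w (Ordinal lt_mn) 0) Bv.
rewrite !mxE (IH (Ordinal lt_mn) (leqnn _)) mulr0 (bigD1 k) //= big1 => [|l lk].
  rewrite addr0 => /eqP; rewrite mulf_eq0 => /orP [|/eqP //].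
  by rewrite (negbTE (nzB _ k _)) //= (_ : k = m.+1 :> nat) ?eqxx //; lia.
have [le_lm|lt_ml] := leqP l m; first by rewrite IH // mulr0.
move: lk; rewrite -val_eqE /= => lk.
by rewrite trB ?mul0r //; left => /=; lia.
Qed.

Lemma irr_tridiag_eigvec_colinear (B : M) (u v : V) t :
  irr_tridiag B -> B *m u = t *: u -> B *m v = t *: v -> v 0 0 *: u = u 0 0 *: v.
Proof.
move=> irrB Bu Bv; apply/eqP; rewrite -subr_eq0; apply/eqP.
apply: (irr_tridiag_eigvec_eq0 (t := t) irrB); last by rewrite !mxE mulrC subrr.
by rewrite mulmxBr -!scalemxAr Bu Bv scalerBr !scalerA mulrC [u 0 0 * t]mulrC.
Qed.

Lemma irr_tridiag_similar_diag_inj (B N : M) th :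
  irr_tridiag B -> N \in unitmx -> B *m N = N *m diag_mx th ->
  forall i j, th 0 i = th 0 j -> i = j.
Proof.
move=> irrB Nu BN i j th_ij; apply/eqP/negPn/negP => ij.
have eig k : B *m col k N = th 0 k *: col k N.
  rewrite !colE mulmxA BN -mulmxA scalemxAr; congr (_ *m _).
  by apply/colP => x; rewrite mul_diag_mx !mxE; case: eqP => [->|]; rewrite ?mulr0.
have N_inj (w : V) : N *m w = 0 -> w = 0.
  by move/(congr1 (mulmx (invmx N))); rewrite mulKmx // mulmx0.
have eigj : B *m col j N = th 0 i *: col j N by rewrite th_ij eig.
have colin := irr_tridiag_eigvec_colinear irrB (eig i) eigj.
have Ni00 : col i N 0 0 = 0.
  have w0 : col j N 0 0 *: delta_mx i 0 - col i N 0 0 *: delta_mx j 0 = 0 :> V.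
    by apply: N_inj; rewrite mulmxBr -!scalemxAr -!colE colin subrr.
  move: (congr1 (fun w : V => w j 0) w0).
  rewrite !mxE eq_sym (negbTE ij) !eqxx mulr0 mulr1 sub0r.
  by move/eqP; rewrite oppr_eq0 => /eqP.
have ei0 : delta_mx i 0 = 0 :> V.
  by apply: N_inj; rewrite -colE (irr_tridiag_eigvec_eq0 irrB (eig i) Ni00).
move: (congr1 (fun w : V => w i 0) ei0).
by rewrite !mxE !eqxx => /eqP; rewrite oner_eq0.
Qed.

End Eigenvalues.

Section Symmetrizer.
Variables (K : fieldType) (n : nat).
Local Notation M := 'M[K]_n.+1.

Definition tridiag_weight (B : M) (k : nat) : K :=
  \prod_(m < k) (B (inord m.+1) (inord m) / B (inord m) (inord m.+1)).

(* The diagonal matrix [D] with [D_(m+1) / D_m = B_(m+1,m) / B_(m,m+1)],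
   which makes [D B^T = B D]. *)
Definition tridiag_symmetrizer (B : M) : M := diag_mx (\row_k tridiag_weight B k).

Variable B : M.
Hypothesis irrB : irr_tridiag B.

Lemma tridiag_weightS m :
  tridiag_weight B m.+1
    = tridiag_weight B m * (B (inord m.+1) (inord m) / B (inord m) (inord m.+1)).
Proof. by rewrite /tridiag_weight big_ord_recr. Qed.

Lemma tridiag_weight_neq0 (k : 'I_n.+1) : tridiag_weight B k != 0.
Proof.
apply/prodf_neq0 => m _; have := ltn_ord k; have := ltn_ord m => lt_mk lt_kn.
by rewrite mulf_neq0 ?invr_eq0 //; apply: irrB.2; rewrite !inordK ?eqxx ?orbT //; lia.
Qed.

Lemma tridiag_symmetrizer_unit : tridiag_symmetrizer B \in unitmx.
Proof.
rewrite unitmxE det_diag unitfE; apply/prodf_neq0 => k _.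
by rewrite mxE tridiag_weight_neq0.
Qed.

Lemma tridiag_symmetrizerP : tridiag_symmetrizer B *m B^T = B *m tridiag_symmetrizer B.
Proof.
have [trB nzB] := irrB.
apply/matrixP => x y; rewrite mul_diag_mx mul_mx_diag !mxE.
have [xy|nxy] := eqVneq x y; first by rewrite xy mulrC.
have [ey|ney] := eqVneq (y : nat) x.+1.
  have nz : B x y != 0 by apply: nzB; rewrite ey eqxx.
  rewrite ey tridiag_weightS.
  have -> : (inord x.+1 : 'I_n.+1) = y by apply/val_inj; rewrite /= inordK -ey.
  by rewrite inord_val; field.
have [ex|nex] := eqVneq (x : nat) y.+1.
  have nz : B y x != 0 by apply: nzB; rewrite ex eqxx.
  rewrite ex tridiag_weightS.
  have -> : (inord y.+1 : 'I_n.+1) = x by apply/val_inj; rewrite /= inordK -ex.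
  by rewrite inord_val; field.
move: nxy; rewrite -val_eqE /= => nxy.
by rewrite !trB ?mulr0 ?mul0r //=; lia.
Qed.

End Symmetrizer.

Section TransposeConj.
Variables (K : fieldType) (n : nat).
Local Notation M := 'M[K]_n.+1.

Definition trconj (E X : M) : M := E *m X^T *m invmx E.

Lemma trconj_id (E X : M) : E \in unitmx -> E *m X^T = X *m E -> trconj E X = X.
Proof. by move=> Eu EX; rewrite /trconj EX mulmxK. Qed.

Lemma mx_wrt_trconj_id (P D X : M) : P \in unitmx ->
  D *m (mx_wrt P X)^T = mx_wrt P X *m D ->
  (P *m D *m P^T) *m X^T = X *m (P *m D *m P^T).
Proof.
move=> Pu /(congr1 (fun Z => P *m Z *m P^T)).
by rewrite /mx_wrt !trmx_mul trmx_inv !mulmxA mulmxV // mul1mx mulmxKV ?unitmx_tr.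
Qed.

Variable E : M.
Hypotheses (Eu : E \in unitmx) (Esym : E^T = E).

Lemma trconjK : involutive (trconj E).
Proof.
move=> X; rewrite /trconj !trmx_mul trmxK trmx_inv Esym !mulmxA mulmxV // mul1mx.
by rewrite mulmxK.
Qed.

Lemma trconj_antiautomorphism : antiautomorphism (trconj E).
Proof.
split; [move=> k X Y | exact: inv_bij trconjK | move=> X Y].
  by rewrite /trconj linearP /= mulmxDr mulmxDl -scalemxAr -scalemxAl.
by rewrite /trconj -!mulmxE trmx_mul !mulmxA mulmxKV.
Qed.

End TransposeConj.

Lemma irr_tridiag_diag_symmetric_form (K : fieldType) (n : nat) (P B Bs : 'M[K]_n.+1) :
  P \in unitmx -> irr_tridiag (mx_wrt P B) -> is_diag_mx (mx_wrt P Bs) ->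
  exists E, [/\ E \in unitmx, E^T = E, E *m B^T = B *m E & E *m Bs^T = Bs *m E].
Proof.
move=> Pu irrB /diag_mxP[th Dth].
exists (P *m tridiag_symmetrizer (mx_wrt P B) *m P^T); split.
- by rewrite !unitmx_mul unitmx_tr Pu tridiag_symmetrizer_unit.
- by rewrite !trmx_mul trmxK tr_diag_mx mulmxA.
- by apply: (mx_wrt_trconj_id Pu); apply: tridiag_symmetrizerP.
- by apply: (mx_wrt_trconj_id Pu); rewrite Dth tr_diag_mx diag_mxC.
Qed.

Section Transport.
Variables (K : fieldType) (n : nat) (calA : algType K).
Variables (phi : {lrmorphism 'M[K]_n.+1 -> calA}) (psi : calA -> 'M[K]_n.+1).
Hypotheses (phiK : cancel phi psi) (psiK : cancel psi phi).

Lemma transport_involutive s : involutive s -> involutive (phi \o s \o psi).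
Proof. by move=> sK X; rewrite /= phiK sK psiK. Qed.

Lemma transport_antiautomorphism s :
  antiautomorphism s -> antiautomorphism (phi \o s \o psi).
Proof.
move=> [sL s_bij sM]; split=> [k X Y | | X Y].
- rewrite /=; have -> : psi (k *: X + Y) = k *: psi X + psi Y.
    by apply: (can_inj phiK); rewrite linearP /= !psiK.
  by rewrite sL linearP.
- exact: bij_comp (bij_comp (Bijective phiK psiK) s_bij) (Bijective psiK phiK).
- rewrite /=; have -> : psi (X * Y) = psi X * psi Y.
    apply: (can_inj phiK).
    by rewrite psiK -{1}(psiK X) -{1}(psiK Y) rmorphM.
  by rewrite (sM (psi X) (psi Y)) rmorphM.
Qed.

End Transport.

Theorem theorem5p8 (K : fieldType) (d : nat) (calA : algType K)
  (phi : {lrmorphism 'M[K]_(d.+1) -> calA}) (phi_bij : bijective phi)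
  (A As : calA) :
  leonard_pair phi A As ->
  exists dag : calA -> calA,
    [/\ antiautomorphism dag, dag A = A, dag As = As,
        (forall X : calA, dag (dag X) = X) &
        (forall tau : calA -> calA,
            antiautomorphism tau -> tau A = A -> tau As = As -> tau =1 dag)].
Proof.
move=> [MA [MAs [<- [<- [[P [Pu [irrA dAs]]] [Q [Qu [irrAs _]]]]]]]].
have [psi phiK psiK] := phi_bij.
have /diag_mxP[th Dth] := dAs.
have th_inj : forall i j, th 0 i = th 0 j -> i = j.
  apply: (irr_tridiag_similar_diag_inj irrAs (N := invmx Q *m P)).
    by rewrite unitmx_mul unitmx_inv Qu.
  by rewrite -Dth /mx_wrt !mulmxA mulmxK // mulmxK.
have [E [Eu Esym EA EAs]] := irr_tridiag_diag_symmetric_form Pu irrA dAs.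
have dag_anti := transport_antiautomorphism phiK psiK (trconj_antiautomorphism Eu Esym).
exists (phi \o trconj E \o psi); split => //=.
- by rewrite phiK trconj_id.
- by rewrite phiK trconj_id.
- exact: transport_involutive (trconjK Eu Esym).
move=> tau tau_anti tauA tauAs X.
have closed := subalg_closed_conj Pu
  (subalg_closed_comap phi (antiautomorphism_eq_closed tau_anti dag_anti)).
have := irr_tridiag_diag_generate closed irrA th_inj _ _ (mx_wrt P (psi X)).
rewrite /= !mx_wrtK // psiK; apply.
- by rewrite tauA phiK trconj_id.
- by rewrite -Dth mx_wrtK // tauAs phiK trconj_id.
Qed.
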